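(* Fix an iteration $t$, an agent $p$, and a noise realization $\xi\in\mathbb{R}^{J\times K}$. Let $w^{t+1},\lambda^t_p,z^t_p\in\mathbb{R}^{J\times K}$, $\rho^t>0$, $\delta^t>0$ be given and $$\Phi(z)=\langle f'_p(z^t_p;\mathcal{D}_p),z\rangle+\tfrac{\rho^t}{2}\big\|w^{t+1}-z+\tfrac1{\rho^t}(\lambda^t_p-\xi)\big\|^2 .$$ Let $z^{t+1}_p(\mathcal{D}_p)=\operatorname{argmin}_{z\in\mathcal{W}\cap\widehat{\mathcal{W}}^t_p}\Phi(z)$ where $\widehat{\mathcal{W}}^t_p=\{z:\|z-z^t_p\|\le\delta^t\}$, and for $\ell>0$ let $z^{t+1}_p(\ell,\mathcal{D}_p)=\operatorname{argmin}_{z\in\mathbb{R}^{J\times K}}\Phi(z)+\sum_{m=1}^M\ln(1+e^{\ell h^t_m(z)})$. Then $\lim_{\ell\to\infty}z^{t+1}_p(\ell,\mathcal{D}_p)=z^{t+1}_p(\mathcal{D}_p)$.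
   Context: $\mathbb{R}^{J\times K}$ carries the Frobenius inner product and norm. $f_p(\cdot;\mathcal{D}_p)$ is the local empirical risk $\frac1I\sum_i\varphi(z;x_{pi},y_{pi})+\frac\beta Pr(z)$ (convex loss $\varphi$, convex regularizer $r$, $\beta>0$) and $f'_p(z^t_p;\mathcal{D}_p)$ a subgradient at $z^t_p$. $\mathcal{W}\subset\mathbb{R}^{J\times K}$ is compact convex, and $\mathcal{W}\cap\widehat{\mathcal{W}}^t_p=\{z:h^t_m(z)\le0,\ m\in[M]\}$ with each $h^t_m$ convex and twice continuously differentiable. Both problems have strongly convex objectives and unique minimizers. *)

From mathcomp Require Import all_boot all_order all_algebra.
From mathcomp Require Import all_classical all_reals all_analysis.
Set Implicit Arguments. Unset Strict Implicit. Unset Printing Implicit Defensive.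
Import Order.TTheory GRing.Theory Num.Theory numFieldNormedType.Exports.
Local Open Scope ring_scope.
Local Open Scope classical_set_scope.

Section Defs.
Context {R : realType} {J K : nat}.
Local Notation Mat := 'M[R]_(J, K).

Definition frob_dot (A B : Mat) : R := \sum_(i < J) \sum_(j < K) A i j * B i j.
Definition frob_norm (A : Mat) : R := Num.sqrt (frob_dot A A).

Definition subgradient (f : Mat -> R) (z g : Mat) : Prop :=
  forall y, f z + frob_dot g (y - z) <= f y.

Definition C2 (h : Mat -> R) : Prop :=
  forall u v : Mat,
    (forall z, derivable h z u) /\
    (forall z, derivable ('D_u h) z v) /\
    continuous ('D_v ('D_u h)).

Definition emp_risk {X Y : Type} {I : nat} (phi : Mat -> X -> Y -> R)
  (r : Mat -> R) (beta : R) (P : nat) (xs : 'I_I -> X) (ys : 'I_I -> Y)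
  (z : Mat) : R :=
  (I%:R)^-1 * (\sum_(i < I) phi z (xs i) (ys i)) + beta / P%:R * r z.

Definition Phi (g w lam xi : Mat) (rho : R) (z : Mat) : R :=
  frob_dot g z + rho / 2 * (frob_norm (w - z + rho^-1 *: (lam - xi))) ^+ 2.

Definition penalty {M : nat} (h : 'I_M -> Mat -> R) (l : R) (z : Mat) : R :=
  \sum_(m < M) ln (1 + expR (l * h m z)).

End Defs.

From mathcomp Require Import all_boot all_order all_algebra.
From mathcomp Require Import all_classical all_reals all_analysis.
From mathcomp Require Import ring lra.
Import Order.TTheory GRing.Theory Num.Theory numFieldNormedType.Exports.
Local Open Scope ring_scope.
Local Open Scope classical_set_scope.

Set Implicit Arguments.
Unset Strict Implicit.
Unset Printing Implicit Defensive.

(* Completing the square, Phi z = rho/2 |z - c|^2 + k.  Along zstar + u/l the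
   penalty tends, as l -> +oo, to the sum L(u) of softplus (h_m'(zstar; u)) over
   the constraints active at zstar, while the tangent inequality of the convex h_m
   bounds the penalty at any z from below by L(l (z - zstar)) >= inf L.  Comparing
   the penalized minimizer z_l with zstar + u/l for u with L(u) close to inf L
   shows that, for large l, z_l violates every constraint by at most eta and is
   eta-optimal for Phi.  By compactness, lower semicontinuity of the convex h_m
   and strong convexity of |. - c|^2 on the feasible set, such points are
   uniformly close to zstar. *)

Section softplus.
Context {R : realType}.

Definition softplus (s : R) : R := ln (1 + expR s).

Lemma softplus_ge0 s : 0 <= softplus s.
Proof. by rewrite ln_ge0 // lerDl expR_ge0. Qed.

Lemma softplus_ge s : s <= softplus s.
Proof.
rewrite -{1}(expRK s) ler_ln ?posrE ?addr_gt0 ?expR_gt0 //.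
by rewrite lerDr.
Qed.

Lemma softplus_le_expR s : softplus s <= expR s.
Proof. by rewrite le_ln1Dx // (lt_le_trans _ (expR_ge0 s)) // ltrN10. Qed.

Lemma ler_softplus : {homo softplus : a b / a <= b}.
Proof.
by move=> a b ab; rewrite ler_ln ?posrE ?addr_gt0 ?expR_gt0 // lerD2l ler_expR.
Qed.

Lemma softplus_le_dist a b : softplus a <= softplus b + `|a - b|.
Proof.
have [ab|ba] := leP a b; first by rewrite (le_trans (ler_softplus ab)) // lerDl.
rewrite gtr0_norm ?subr_gt0 // addrC -{1}(expRK (a - b)) /softplus.
rewrite -lnM ?posrE ?expR_gt0 ?addr_gt0 ?expR_gt0 //.
rewrite ler_ln ?posrE ?mulr_gt0 ?expR_gt0 ?addr_gt0 ?expR_gt0 //.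
rewrite mulrDr mulr1 -expRD subrK lerD2r -expR0 ler_expR subr_ge0.
exact: ltW.
Qed.

End softplus.

Section convex_directional_derivative.
Context {R : realType} {V : normedModType R}.
Implicit Types (f : V -> R) (y u v : V).

Lemma invr_cvgy_dnbhs0 : (fun l : R => l^-1) @ +oo --> (0 : R)^'.
Proof.
move=> A /=; rewrite /dnbhs /within /= => /nbhs_ballP [e e0 eA].
suff : \forall l \near +oo, A l^-1 by [].
near=> l; have l0 : 0 < l by [].
apply: eA; last by rewrite invr_neq0 // gt_eqF.
rewrite /ball /= sub0r normrN gtr0_norm ?invr_gt0 // invf_plt ?posrE //.
by near: l; apply: nbhs_pinfty_gt; rewrite num_real.
Unshelve. all: by end_near. Qed.

Lemma derive_cvgy f y v : derivable f y v ->
  l * (f (y + l^-1 *: v) - f y) @[l --> +oo] --> 'D_v f y.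
Proof.
move=> df; apply: cvg_trans _ (cvg_comp _ _ invr_cvgy_dnbhs0 df).
apply: near_eq_cvg; near=> l; have l0 : 0 < l by [].
by rewrite /= invrK [_ + y]addrC.
Unshelve. all: by end_near. Qed.

Variable f : V -> R.
Hypothesis cf : convex_function setT f.

Lemma convex_le a x y : 0 <= a -> a <= 1 ->
  f (a *: x + (1 - a) *: y) <= a * f x + (1 - a) * f y.
Proof. by move=> a0 a1; exact: (cf (Itv01 a0 a1) (in_setT x) (in_setT y)). Qed.

Lemma convex_slope_le y v s t : 0 < s -> s <= t ->
  s^-1 * (f (y + s *: v) - f y) <= t^-1 * (f (y + t *: v) - f y).
Proof.
move=> s0 st; have t0 : 0 < t := lt_le_trans s0 st.
have ys : y + s *: v = (s / t) *: (y + t *: v) + (1 - s / t) *: y.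
  rewrite scalerDr scalerA divfK ?gt_eqF // addrAC -scalerDl.
  by rewrite [s / t + _]addrC subrK scale1r addrC.
have := @convex_le (s / t) (y + t *: v) y (divr_ge0 (ltW s0) (ltW t0)).
rewrite ler_pdivrMr // mul1r -ys => /(_ st) cvx.
have -> : t^-1 * (f (y + t *: v) - f y) = s^-1 * (s / t * (f (y + t *: v) - f y)).
  by field; rewrite !gt_eqF.
apply: ler_wpM2l; first by rewrite invr_ge0 ltW.
rewrite mulrBr; rewrite mulrBl mul1r in cvx; lra.
Qed.

Lemma derive_le_slope y v t : derivable f y v -> 0 < t ->
  'D_v f y <= t^-1 * (f (y + t *: v) - f y).
Proof.
move=> df t0; apply: (cvgr_to_le (derive_cvgy df)); near=> l.
have l0 : 0 < l by [].
have tl : t^-1 < l by near: l; apply: nbhs_pinfty_gt; rewrite num_real.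
rewrite -[l in l * _]invrK; apply: convex_slope_le; first by rewrite invr_gt0.
by rewrite -(invrK t) lef_pV2 ?posrE ?invr_gt0 // ltW.
Unshelve. all: by end_near. Qed.

Lemma deriveD_le y u v :
  derivable f y u -> derivable f y v -> derivable f y (u + v) ->
  'D_(u + v) f y <= 'D_u f y + 'D_v f y.
Proof.
move=> du dv duv; apply: (cvgr_to_ge (cvgD (derive_cvgy du) (derive_cvgy dv))).
near=> l; have l0 : 0 < l by [].
have t0 : 0 < (2 * l)^-1 by rewrite invr_gt0 mulr_gt0.
apply: (le_trans (derive_le_slope duv t0)); rewrite invrK.
have mid : y + (2 * l)^-1 *: (u + v) =
    2^-1 *: (y + l^-1 *: u) + (1 - 2^-1) *: (y + l^-1 *: v).
  rewrite (_ : 1 - 2^-1 = 2^-1 :> R); last by field.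
  rewrite !scalerDr !scalerA addrACA -scalerDl (_ : 2^-1 + 2^-1 = 1 :> R).
    by rewrite scale1r invfM addrA.
  by field.
have := @convex_le 2^-1 (y + l^-1 *: u) (y + l^-1 *: v).
rewrite -mid invr_ge0 ler0n invf_le1 ?ler1n // => /(_ isT isT) cvx.
move: cvx; set C := f (y + _ *: (u + v)).
set A := f (y + l^-1 *: u); set B := f (y + l^-1 *: v).
move/(ler_wpM2l (ltW (mulr_gt0 (ltr0n _ 2) l0))).
have -> : 2 * l * (2^-1 * A + (1 - 2^-1) * B) =
  l * (A - f y) + l * (B - f y) + 2 * l * f y by field.
rewrite mulrBr => H; rewrite fctE -/A -/B; nra.
Unshelve. all: by end_near. Qed.

Lemma derive_tangent_le y z : derivable f y (z - y) -> f y + 'D_(z - y) f y <= f z.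
Proof.
move=> dzy; have := derive_le_slope dzy ltr01.
by rewrite invr1 mul1r scale1r addrCA subrr addr0 lerBrDl addrC.
Qed.

Lemma convex_le0_midpoint x y : f x <= 0 -> f y <= 0 -> f (2^-1 *: (x + y)) <= 0.
Proof.
move=> fx fy; have := @convex_le 2^-1 x y.
rewrite invr_ge0 ler0n invf_le1 ?ler1n // => /(_ isT isT).
rewrite (_ : 1 - 2^-1 = 2^-1 :> R); last by field.
rewrite -scalerDr => /le_trans; apply.
by rewrite -mulrDr mulr_ge0_le0 ?invr_ge0 // -(addr0 0) lerD.
Qed.

Lemma deriveZ_le y v c : 0 < c ->
  derivable f y v -> derivable f y (c *: v) -> 'D_(c *: v) f y <= c * 'D_v f y.
Proof.
move=> c0 dv dcv; apply: (cvgr_to_ge (cvgM (cvg_cst c) (derive_cvgy dv))).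
near=> l; have l0 : 0 < l by [].
apply: (le_trans (derive_le_slope dcv (_ : 0 < (c * l)^-1))).
  by rewrite invr_gt0 mulr_gt0.
rewrite scalerA (_ : (c * l)^-1 * c = l^-1); last by field; rewrite !gt_eqF.
by rewrite invrK /= mulrA.
Unshelve. all: by end_near. Qed.

End convex_directional_derivative.

Section convex_matrix_function.
Context {R : realType} {J K : nat}.
Local Notation Mat := 'M[R]_(J, K).

Definition lsc_entrywise (f : Mat -> R) (x : Mat) :=
  forall e, 0 < e -> exists2 r, 0 < r &
    forall z : Mat, (forall i j, `|z i j - x i j| <= r) -> f x - e <= f z.

Lemma lsc_entrywise_le f x c : lsc_entrywise f x ->
  (forall e r, 0 < e -> 0 < r ->
     exists2 z : Mat, f z <= c + e & forall i j, `|z i j - x i j| <= r) ->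
  f x <= c.
Proof.
move=> fx near_x; apply/ler_addgt0Pr => e e0.
have e20 : 0 < e / 2 by rewrite divr_gt0.
have [r r0 fr] := fx _ e20; have [z fz xz] := near_x _ _ e20 r0.
by have := fr _ xz; lra.
Qed.

Variables (h : Mat -> R) (y : Mat).
Hypotheses (hc : convex_function setT h) (hd : forall v, derivable h y v).
(* [derivable] unfolds to a product, which would make [v] implicit. *)
Arguments hd : clear implicits.

Lemma derive_sum_le (I : Type) (s : seq I) (F : I -> Mat) :
  'D_(\sum_(i <- s) F i) h y <= \sum_(i <- s) 'D_(F i) h y.
Proof.
elim: s => [|a s IH]; first by rewrite !big_nil derive0.
by rewrite !big_cons (le_trans (deriveD_le hc _ _ _)) ?lerD2l.
Qed.

Lemma derive_scale_le c v :
  'D_(c *: v) h y <= `|c| * Num.max ('D_v h y) ('D_(- v) h y).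
Proof.
have [c0|c0|->] := ltgtP c 0; last by rewrite scale0r derive0 normr0 mul0r.
- have -> : c *: v = (- c) *: (- v) by rewrite scaleNr scalerN opprK.
  rewrite ltr0_norm //.
  apply: (le_trans (deriveZ_le hc _ _ _)); rewrite ?oppr_gt0 //.
  by apply: ler_wpM2l; [rewrite oppr_ge0 ltW | rewrite le_max lexx orbT].
- apply: (le_trans (deriveZ_le hc _ _ _)) => //.
  by rewrite gtr0_norm //; apply: ler_wpM2l; [exact: ltW | rewrite le_max lexx].
Qed.

Lemma derive_le_entrywise v : 'D_v h y <= \sum_i \sum_j `|v i j| *
  Num.max ('D_(delta_mx i j) h y) ('D_(- delta_mx i j) h y).
Proof.
rewrite {1}(matrix_sum_delta v); apply: (le_trans (derive_sum_le _ _)).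
apply: ler_sum => i _; apply: (le_trans (derive_sum_le _ _)).
by apply: ler_sum => j _; exact: derive_scale_le.
Qed.

Lemma convex_lsc_entrywise : lsc_entrywise h y.
Proof.
move=> e e0.
set C := \sum_i \sum_j `|Num.max ('D_(delta_mx i j : Mat) h y) ('D_(- delta_mx i j) h y)|.
have C0 : 0 <= C by do 2!apply: sumr_ge0 => ? _.
exists (e / (C + 1)) => [|z zy]; first by rewrite divr_gt0 // ltr_wpDl.
have tangent := derive_tangent_le hc (hd (z - y)).
have := deriveD_le hc (hd (z - y)) (hd (y - z)) (hd _).
rewrite addrA subrK subrr derive0 => derive_opp_ge.
have : 'D_(y - z) h y <= C * (e / (C + 1)).
  apply: (le_trans (derive_le_entrywise _)); rewrite mulr_suml.
  apply: ler_sum => i _; rewrite mulr_suml; apply: ler_sum => j _.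
  apply: (le_trans (ler_norm _)); rewrite normrM normr_id mulrC.
  by apply: ler_wpM2l => //; rewrite !mxE distrC zy.
have : C * (e / (C + 1)) <= e by rewrite mulrA ler_pdivrMr ?ltr_wpDl //; nra.
lra.
Qed.

End convex_matrix_function.

Section frobenius.
Context {R : realType} {J K : nat}.
Local Notation Mat := 'M[R]_(J, K).
Implicit Types x y p : Mat.

Definition frob_sq x := frob_dot x x.

Lemma frob_dotE x y :
  frob_dot x y = \sum_(ij : 'I_J * 'I_K) x ij.1 ij.2 * y ij.1 ij.2.
Proof. by rewrite /frob_dot pair_bigA. Qed.

Lemma frob_sq_ge0 x : 0 <= frob_sq x.
Proof. by rewrite /frob_sq frob_dotE sumr_ge0 // => ij _; rewrite -expr2 sqr_ge0. Qed.

Lemma frob_normE x : frob_norm x ^+ 2 = frob_sq x.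
Proof. by rewrite sqr_sqrtr ?frob_sq_ge0. Qed.

Lemma normr_entry_le x i j : `|x i j| <= 1 + frob_sq x.
Proof.
have entry_le : x i j ^+ 2 <= frob_sq x.
  rewrite /frob_sq frob_dotE (bigD1 (i, j)) //= -expr2 lerDl.
  by apply: sumr_ge0 => ij _; rewrite -expr2 sqr_ge0.
apply: (le_trans _ (_ : 1 + x i j ^+ 2 <= _)); last by rewrite lerD2l.
have [x1|x1] := leP `|x i j| 1; first by rewrite (le_trans x1) // lerDl sqr_ge0.
by rewrite -real_normK ?num_real // ler_wpDl // expr2 ler_peMl // ltW.
Qed.

Lemma frob_sq_midpoint x y p : frob_sq (2^-1 *: (x + y) - p) =
  2^-1 * frob_sq (x - p) + 2^-1 * frob_sq (y - p) - 4^-1 * frob_sq (x - y).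
Proof.
rewrite /frob_sq !frob_dotE !mulr_sumr -sumrN -!big_split /=.
by apply: eq_bigr => ij _; rewrite !mxE; field.
Qed.

Lemma frob_sq_sub_cont p x e : 0 < e -> exists2 r, 0 < r & forall y : Mat,
  (forall i j, `|y i j - x i j| <= r) -> `|frob_sq (y - p) - frob_sq (x - p)| <= e.
Proof.
move=> e0; set C := \sum_(ij : 'I_J * 'I_K) (2 * `|(x - p) ij.1 ij.2| + 1).
have C0 : 0 <= C by apply: sumr_ge0 => ij _; rewrite addr_ge0 ?mulr_ge0.
have eC0 : 0 < e / (C + 1) by rewrite divr_gt0 // ltr_wpDl.
exists (Num.min 1 (e / (C + 1))) => [|y xy]; first by rewrite lt_min ltr01.
set r := Num.min _ _ in xy.
have r1 : r <= 1 by rewrite ge_min lexx.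
have rC : C * r <= e.
  rewrite (le_trans (ler_wpM2l C0 (_ : r <= e / (C + 1)))) ?ge_min ?lexx ?orbT //.
  by rewrite mulrA ler_pdivrMr ?ltr_wpDl //; nra.
have -> : frob_sq (y - p) - frob_sq (x - p) = \sum_(ij : 'I_J * 'I_K)
    (2 * (x - p) ij.1 ij.2 * (y - x) ij.1 ij.2 + (y - x) ij.1 ij.2 ^+ 2).
  rewrite /frob_sq !frob_dotE -sumrB; apply: eq_bigr => ij _; rewrite !mxE.
  ring.
apply: le_trans (ler_norm_sum _ _ _) (le_trans _ rC).
rewrite mulr_suml; apply: ler_sum => -[i j] _ /=.
have : `|(y - x) i j| <= r by rewrite !mxE; exact: xy.
move: ((x - p) i j) ((y - x) i j) => a b br.
apply: (le_trans (ler_normD _ _)); rewrite !normrM ger0_norm // -expr2.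
have b2r : `|b| ^+ 2 <= r.
  by rewrite expr2 (le_trans _ br) // ler_piMr // (le_trans br).
have := normr_ge0 a; have := normr_ge0 b; nra.
Qed.

Lemma frob_sq_shift_near p x u e : 0 < e ->
  \forall l \near +oo, frob_sq (x + l^-1 *: u - p) <= frob_sq (x - p) + e.
Proof.
move=> e0; have [r r0 xr] := frob_sq_sub_cont p x e0.
near=> l; have l0 : 0 < l by [].
have /xr : forall i j, `|(x + l^-1 *: u) i j - x i j| <= r.
  move=> i j; rewrite !mxE addrAC subrr add0r normrM gtr0_norm ?invr_gt0 //.
  have lr : (1 + frob_sq u) / r < l.
    by near: l; apply: nbhs_pinfty_gt; rewrite num_real.
  by rewrite ler_pdivrMl // (le_trans (normr_entry_le _ _ _)) // -ler_pdivrMr // ltW.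
by rewrite ler_norml => /andP[_]; rewrite lerBlDl addrC.
Unshelve. all: by end_near. Qed.

Lemma Phi_frob_sq g w lam xi rho z : 0 < rho ->
  Phi g w lam xi rho z =
  rho / 2 * frob_sq (z - (w + rho^-1 *: (lam - xi) - rho^-1 *: g)) +
  (frob_dot g (w + rho^-1 *: (lam - xi)) - (2 * rho)^-1 * frob_sq g).
Proof.
move=> rho0; rewrite /Phi frob_normE /frob_sq !frob_dotE !mulr_sumr -sumrN.
rewrite -!big_split /=; apply: eq_bigr => ij _; rewrite !mxE.
by field; rewrite gt_eqF.
Qed.

Lemma Phi_has_lbound (g w lam xi : Mat) rho : 0 < rho ->
  has_lbound (range (Phi g w lam xi rho)).
Proof.
move=> rho0.
exists (frob_dot g (w + rho^-1 *: (lam - xi)) - (2 * rho)^-1 * frob_sq g).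
move=> _ [z _ <-]; rewrite Phi_frob_sq // lerDr.
by rewrite mulr_ge0 ?frob_sq_ge0 // divr_ge0 ?ltW.
Qed.

Lemma Phi_shift_near (g w lam xi zs u : Mat) rho e : 0 < rho -> 0 < e ->
  \forall l \near +oo,
    Phi g w lam xi rho (zs + l^-1 *: u) <= Phi g w lam xi rho zs + e.
Proof.
move=> rho0 e0; have rho20 : 0 < rho / 2 by rewrite divr_gt0.
have e'0 : 0 < e / (rho / 2) by rewrite divr_gt0.
set c := w + rho^-1 *: (lam - xi) - rho^-1 *: g.
apply: filterS (frob_sq_shift_near c zs u e'0) => l Ql.
rewrite !Phi_frob_sq // [X in _ <= X]addrAC lerD2r.
rewrite (le_trans (ler_wpM2l (ltW rho20) Ql)) //.
by rewrite mulrDr mulrCA divff ?gt_eqF ?mulr1.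
Qed.

Lemma frob_sq_sub_lsc p x : lsc_entrywise (fun z => frob_sq (z - p)) x /\
  lsc_entrywise (fun z => - frob_sq (z - p)) x.
Proof.
split=> e e0; have [r r0 xr] := frob_sq_sub_cont p x e0; exists r => // z /xr;
  rewrite ler_norml => /andP[]; lra.
Qed.

End frobenius.

Section matrix_compactness.
Context {R : realType} {J K : nat}.
Local Notation Mat := 'M[R]_(J, K).

Lemma entrywise_cluster (T : Type) (F : set_system T) {PF : ProperFilter F}
    (z : T -> Mat) (c : R) :
  (\forall t \near F, forall i j, `|z t i j| <= c) ->
  exists zb : Mat, forall P : T -> Prop, (\forall t \near F, P t) ->
    forall r, 0 < r -> exists2 t, P t & forall i j, `|z t i j - zb i j| <= r.
Proof.
move=> Fbox.
set box := [set v : 'rV[R]_(J * K) | forall k, `[- c, c]%classic (v ord0 k)].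
have box_compact : compact box.
  by apply: (@rV_compact _ _ (fun=> `[- c, c]%classic)) => _; exact: segment_compact.
have Fv : ((fun t => mxvec (z t)) @ F) box.
  apply: filterS Fbox => t zc k; case/mxvec_indexP: k => i j.
  by rewrite mxvecE /= in_itv /= -ler_norml.
have [vb [_ clv]] := box_compact _ _ Fv.
exists (vec_mx vb) => P FP r r0.
have FPv : ((fun t => mxvec (z t)) @ F) [set mxvec (z t) | t in P].
  by apply: filterS FP => t Pt; exists t.
have [_ [[t Pt <-] vbr]] := clv _ _ FPv (nbhsx_ballx vb r r0).
exists t => // i j; have := vbr.2 ord0 (mxvec_index i j).
have vbE : vb ord0 (mxvec_index i j) = vec_mx vb i j.
  by rewrite -{1}(vec_mxK vb) mxvecE.
by rewrite /ball /= mxvecE vbE distrC => /ltW.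
Qed.
End matrix_compactness.

Section stability_of_argmin.
Context {R : realType} {J K : nat}.
Local Notation Mat := 'M[R]_(J, K).

Lemma frob_sq_argmin_strong (S : set Mat) (p zs : Mat) :
  (forall x y, S x -> S y -> S (2^-1 *: (x + y))) -> S zs ->
  (forall z, S z -> frob_sq (zs - p) <= frob_sq (z - p)) ->
  forall z, S z -> frob_sq (zs - p) + 2^-1 * frob_sq (z - zs) <= frob_sq (z - p).
Proof.
move=> Smid Szs zs_min z Sz; have := zs_min _ (Smid _ _ Sz Szs).
rewrite frob_sq_midpoint; lra.
Qed.

Variables (M : nat) (h : 'I_M -> Mat -> R) (p zs : Mat).
Hypotheses (hc : forall m, convex_function setT (h m))
  (hd : forall m z v, derivable (h m) z v) (hzs : forall m, h m zs <= 0)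
  (zs_min : forall z, (forall m, h m z <= 0) -> frob_sq (zs - p) <= frob_sq (z - p)).
Arguments hd : clear implicits.

Lemma approx_argmin_cluster d (zf : R -> Mat) :
  (forall eta, 0 < eta -> [/\ forall m, h m (zf eta) <= eta,
     frob_sq (zf eta - p) <= frob_sq (zs - p) + eta & d <= frob_sq (zf eta - zs)]) ->
  exists zb, [/\ forall m, h m zb <= 0, frob_sq (zb - p) <= frob_sq (zs - p) &
    d <= frob_sq (zb - zs)].
Proof.
move=> zf_approx; set Qs := frob_sq (zs - p).
have zf_box : \forall eta \near 0^'+,
    forall i j, `|zf eta i j| <= (1 + (Qs + 1)) + (1 + frob_sq p).
  near=> eta => i j; have eta0 : 0 < eta by [].
  have [_ Qzf _] := zf_approx eta eta0; have eta1 : eta <= 1 by apply: ltW.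
  rewrite -[zf eta i j](subrK (p i j)) (le_trans (ler_normD _ _)) // lerD //.
    have := normr_entry_le (zf eta - p) i j; rewrite !mxE => /le_trans; apply.
    by rewrite lerD2l (le_trans Qzf) ?lerD2l.
  exact: normr_entry_le.
have [zb cl] := entrywise_cluster zf_box.
have near_zb e r : 0 < e -> 0 < r -> exists2 z : Mat, [/\ forall m, h m z <= e,
    frob_sq (z - p) <= Qs + e & d <= frob_sq (z - zs)] &
    forall i j, `|z i j - zb i j| <= r.
  move=> e0 r0.
  have Fe : \forall eta \near 0^'+, [/\ forall m, h m (zf eta) <= e,
      frob_sq (zf eta - p) <= Qs + e & d <= frob_sq (zf eta - zs)].
    near=> eta; have eta0 : 0 < eta by [].
    have [hz Qz dz] := zf_approx eta eta0; have etae : eta <= e by apply: ltW.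
    split => // [m|]; first exact: le_trans (hz m) etae.
    by rewrite (le_trans Qz) ?lerD2l.
  by have [eta ? ?] := cl _ Fe r r0; exists (zf eta).
exists zb; split.
- move=> m; apply: lsc_entrywise_le (convex_lsc_entrywise (hc m) (hd m zb)) _.
  move=> e r e0 r0; have [z [hz _ _] zr] := near_zb e r e0 r0.
  by exists z; rewrite ?add0r.
- apply: lsc_entrywise_le (frob_sq_sub_lsc p zb).1 _ => e r e0 r0.
  by have [z [_ Qz _] zr] := near_zb e r e0 r0; exists z.
- rewrite -lerN2; apply: lsc_entrywise_le (frob_sq_sub_lsc zs zb).2 _ => e r e0 r0.
  by have [z [_ _ dz] zr] := near_zb e r e0 r0; exists z => //; lra.
Unshelve. all: by end_near. Qed.

Lemma approx_argmin_close d : 0 < d -> exists2 eta, 0 < eta &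
  forall z, (forall m, h m z <= eta) -> frob_sq (z - p) <= frob_sq (zs - p) + eta ->
  frob_sq (z - zs) < d.
Proof.
move=> d0; apply: contrapT => no_eta.
have bad eta : exists z, 0 < eta -> [/\ forall m, h m z <= eta,
    frob_sq (z - p) <= frob_sq (zs - p) + eta & d <= frob_sq (z - zs)].
  have [eta0|eta0] := ltP 0 eta; last by exists 0.
  apply: contrapT => no_z; apply: no_eta; exists eta => // z hz Qz.
  by rewrite ltNge; apply/negP => dz; apply: no_z; exists z.
have [zf zf_bad] := choice bad.
have [zb [hzb Qzb dzb]] := approx_argmin_cluster zf_bad.
have feasible_mid x y : (forall m, h m x <= 0) -> (forall m, h m y <= 0) ->
    forall m, h m (2^-1 *: (x + y)) <= 0.
  by move=> hx hy m; have := convex_le0_midpoint (hc m) (hx m) (hy m).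
by have := frob_sq_argmin_strong feasible_mid hzs zs_min hzb; lra.
Qed.
End stability_of_argmin.

Section penalty_method.
Context {R : realType} {J K : nat}.
Local Notation Mat := 'M[R]_(J, K).

Lemma softplus_le_penalty M (h : 'I_M -> Mat -> R) l z m :
  softplus (l * h m z) <= penalty h l z.
Proof.
rewrite /penalty (bigD1 m) //= lerDl.
by apply: sumr_ge0 => *; exact: softplus_ge0.
Qed.

Variables (M : nat) (h : 'I_M -> Mat -> R) (zs : Mat).
Hypotheses (hc : forall m, convex_function setT (h m))
  (hd : forall m v, derivable (h m) zs v) (hzs : forall m, h m zs <= 0).
Arguments hd : clear implicits.

(* The limit of [penalty h l (zs + l^-1 *: u)] as [l] tends to [+oo]. *)
Definition tangent_penalty (u : Mat) : R :=
  \sum_(m < M) (if h m zs == 0 then softplus ('D_u (h m) zs) else 0).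

Lemma tangent_penalty_ge0 u : 0 <= tangent_penalty u.
Proof. by apply: sumr_ge0 => m _; case: ifP => _; rewrite ?softplus_ge0. Qed.

Lemma tangent_penalty_le_penalty l z : 0 < l ->
  tangent_penalty (l *: (z - zs)) <= penalty h l z.
Proof.
move=> l0; apply: ler_sum => m _; case: eqP => [hm0|_]; last exact: softplus_ge0.
apply: ler_softplus.
have := derive_le_slope (hc m) (hd m (l *: (z - zs))) (_ : 0 < l^-1).
rewrite invrK scalerA mulVf ?gt_eqF // scale1r hm0 subr0 addrCA subrr addr0.
by apply; rewrite invr_gt0.
Qed.

Lemma softplus_shift_near m u e : 0 < e -> \forall l \near +oo,
  softplus (l * h m (zs + l^-1 *: u)) <=
  (if h m zs == 0 then softplus ('D_u (h m) zs) else 0) + e.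
Proof.
move=> e0; have dq := derive_cvgy (hd m u); set D := 'D_u (h m) zs in dq *.
case: eqP => [hm0|/eqP hm0].
  rewrite hm0 in dq; near=> l.
  apply: le_trans (softplus_le_dist _ D) _; rewrite lerD2l distrC ltW //.
  by near: l; move/cvgrPdist_lt: dq => /(_ e e0); apply: filterS => l; rewrite subr0.
have hneg : h m zs < 0 by rewrite lt_neqAle hm0 hzs.
near=> l.
have q_le : l * (h m (zs + l^-1 *: u) - h m zs) <= D + 1.
  by near: l; apply: cvgr_le dq _ _; rewrite ltrDl.
have l_big : (D + 1 - ln e) / (- h m zs) < l.
  by near: l; apply: nbhs_pinfty_gt; rewrite num_real.
rewrite add0r (le_trans (softplus_le_expR _)) // -[e in _ <= e](lnK e0) ler_expR.
rewrite ltr_pdivrMr ?oppr_gt0 // mulrN in l_big; rewrite mulrBr in q_le; lra.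
Unshelve. all: by end_near. Qed.

Lemma penalty_shift_near u e : 0 < e -> \forall l \near +oo,
  penalty h l (zs + l^-1 *: u) <= tangent_penalty u + e.
Proof.
move=> e0; have eM0 : 0 < e / (M%:R + 1) by rewrite divr_gt0 // ltr_wpDl.
near=> l.
have term_le : forall m, softplus (l * h m (zs + l^-1 *: u)) <=
    (if h m zs == 0 then softplus ('D_u (h m) zs) else 0) + e / (M%:R + 1).
  by near: l; apply: filter_forall => m; exact: softplus_shift_near.
apply: (le_trans (ler_sum _ (fun m _ => term_le m))).
rewrite big_split /= sumr_const card_ord lerD2l -[_ *+ M]mulr_natr mulrAC.
by rewrite ler_pdivrMr ?ltr_wpDl // ler_pM2l // lerDl.
Unshelve. all: by end_near. Qed.

Variables (F : Mat -> R) (zl : R -> Mat).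
Hypotheses (F_lb : has_lbound (range F))
  (F_shift : forall u e, 0 < e -> \forall l \near +oo, F (zs + l^-1 *: u) <= F zs + e)
  (zl_min : forall l, 0 < l -> forall z,
     F (zl l) + penalty h l (zl l) <= F z + penalty h l z).

Lemma penalized_argmin_approx eta : 0 < eta -> \forall l \near +oo,
  F (zl l) <= F zs + eta /\ forall m, h m (zl l) <= eta.
Proof.
move=> eta0; set L := range tangent_penalty.
have L_lb : has_lbound L by exists 0 => _ [u _ <-]; exact: tangent_penalty_ge0.
have inf_le l z : 0 < l -> inf L <= penalty h l z.
  move=> l0; apply: le_trans (tangent_penalty_le_penalty z l0).
  by apply: ge_inf => //; exists (l *: (z - zs)).
have e0 : 0 < eta / 3 by rewrite divr_gt0.
have L0 : L !=set0 by exists (tangent_penalty 0), 0.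
have [_ [u _ <-] Lu] := inf_adherent e0 (conj L0 L_lb).
have [k F_ge] := F_lb.
near=> l; have l0 : 0 < l by [].
have opt : F (zl l) + penalty h l (zl l) <= F zs + tangent_penalty u + 2 * (eta / 3).
  have := zl_min l0 (zs + l^-1 *: u).
  have : F (zs + l^-1 *: u) <= F zs + eta / 3 by near: l; exact: F_shift.
  have : penalty h l (zs + l^-1 *: u) <= tangent_penalty u + eta / 3.
    by near: l; exact: penalty_shift_near.
  lra.
have := F_ge _ (imageT F (zl l)); have := inf_le l (zl l) l0.
split=> [|m]; first lra.
have := softplus_ge (l * h m (zl l)); have := softplus_le_penalty h l (zl l) m.
have lB : (F zs + tangent_penalty u + 2 * (eta / 3) - k) / eta < l.
  by near: l; apply: nbhs_pinfty_gt; rewrite num_real.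
rewrite ltr_pdivrMr // in lB; rewrite -(ler_pM2l l0); nra.
Unshelve. all: by end_near. Qed.

End penalty_method.

Theorem proposition4 (R : realType) (J K M I P : nat) (X Y : Type)
  (phi : 'M[R]_(J, K) -> X -> Y -> R) (r : 'M[R]_(J, K) -> R) (beta : R)
  (xs : 'I_I -> X) (ys : 'I_I -> Y)
  (W : set 'M[R]_(J, K)) (h : 'I_M -> 'M[R]_(J, K) -> R)
  (w lam zt xi g zstar : 'M[R]_(J, K)) (rho delta : R)
  (zl : R -> 'M[R]_(J, K)) :
  (0 < I)%N -> (0 < P)%N -> 0 < beta ->
  (forall x y, convex_function setT (fun z : 'M[R]_(J, K) => phi z x y)) -> convex_function setT r ->
  subgradient (emp_risk phi r beta P xs ys) zt g ->
  compact W -> convex_set W ->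
  (forall m, convex_function setT (h m)) -> (forall m, C2 (h m)) ->
  W `&` [set z | frob_norm (z - zt) <= delta] = [set z | forall m, h m z <= 0] ->
  0 < rho -> 0 < delta ->
  (* zstar = argmin of Phi over W ∩ What *)
  (W `&` [set z | frob_norm (z - zt) <= delta]) zstar ->
  (forall z, (W `&` [set z | frob_norm (z - zt) <= delta]) z ->
     Phi g w lam xi rho zstar <= Phi g w lam xi rho z) ->
  (* zl l = argmin over all z of Phi + penalty, for l > 0 *)
  (forall l, 0 < l -> forall z,
     Phi g w lam xi rho (zl l) + penalty h l (zl l)
       <= Phi g w lam xi rho z + penalty h l z) ->
  frob_norm (zl l - zstar) @[l --> +oo] --> 0.
Proof.
move=> _ _ _ _ _ _ _ _ hc hC2 feasibleE rho0 _ zs_feas zs_min zl_min.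
have hd m z v : derivable (h m) z v := (hC2 m v v).1 z.
rewrite feasibleE in zs_feas zs_min.
have rho20 : 0 < rho / 2 by rewrite divr_gt0.
have PhiE z := Phi_frob_sq g w lam xi z rho0.
set c := w + _ - _ in PhiE.
have zs_argmin z : (forall m, h m z <= 0) -> frob_sq (zstar - c) <= frob_sq (z - c).
  by move=> /zs_min; rewrite !PhiE lerD2r ler_pM2l.
apply/cvgrPdist_lt => eps eps0.
have [eta eta0 close] := approx_argmin_close hc hd zs_feas zs_argmin (exprn_gt0 2 eps0).
have penalized := penalized_argmin_approx hc (fun m => hd m zstar) zs_feas
  (Phi_has_lbound g w lam xi rho0) (fun u e => Phi_shift_near g w lam xi zstar u rho0) zl_min.
near=> l.
have Phil : Phi g w lam xi rho (zl l) <= Phi g w lam xi rho zstar + rho / 2 * eta.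
  by near: l; apply: filterS (penalized _ (mulr_gt0 rho20 eta0)) => l [].
have hl : forall m, h m (zl l) <= eta.
  by near: l; apply: filterS (penalized _ eta0) => l [].
have Ql : frob_sq (zl l - c) <= frob_sq (zstar - c) + eta.
  by move: Phil; rewrite !PhiE [X in _ <= X]addrAC lerD2r -mulrDr ler_pM2l.
rewrite sub0r normrN ger0_norm ?sqrtr_ge0 // -(gtr0_norm eps0) -sqrtr_sqr.
by rewrite ltr_sqrt ?exprn_gt0 //; exact: close.
Unshelve. all: by end_near. Qed.
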